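(* Let $\mathcal{M}$ be a saturated model of Presburger arithmetic and $\mathcal{M}_0\preceq\mathcal{M}$ small. Let $\phi(x,a)$, with $x$ a single variable and $a\in\mathcal{M}^k$, define either a single point or a bounded $1$-cell in $\mathcal{M}$, and suppose $\phi(\mathcal{M},a)\cap\mathcal{M}_0=\emptyset$. Then there is $a'\in\mathcal{M}^k$ such that $\mathrm{tp}(a/\mathcal{M}_0)=\mathrm{tp}(a'/\mathcal{M}_0)$ and $\phi(\mathcal{M},a)\cap\phi(\mathcal{M},a')=\emptyset$.
   Context: Presburger arithmetic is $\mathrm{Th}(\mathbb{Z},+,-,<,0,1,\{\equiv_n\}_n)$. A bounded $1$-cell is an infinite set of the form $\{x\in\mathcal{M}:\alpha\le x\le\beta,\ x\equiv_N c\}$ with $\alpha,\beta\in\mathcal{M}$ and $0\le c<N$ integers. *)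

From Stdlib Require Import ZArith List Arith PeanoNat.

Inductive term : Type :=
| TVar (n : nat)
| TZero
| TOne
| TAdd (t u : term)
| TSub (t u : term).

Inductive formula : Type :=
| FEq (t u : term)
| FLt (t u : term)
| FCong (n : positive) (t u : term)
| FFalse
| FNot (p : formula)
| FAnd (p q : formula)
| FOr (p q : formula)
| FEx (n : nat) (p : formula)
| FAll (n : nat) (p : formula).

Record PStruct : Type := {
  car : Type;
  zero : car;
  one : car;
  add : car -> car -> car;
  sub : car -> car -> car;
  lt : car -> car -> Prop;
  cong : positive -> car -> car -> Prop
}.

Definition upd {M : PStruct} (e : nat -> car M) (n : nat) (b : car M) : nat -> car M :=
  fun i => if Nat.eqb i n then b else e i.

Fixpoint eval (M : PStruct) (e : nat -> car M) (t : term) : car M :=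
  match t with
  | TVar n => e n
  | TZero => zero M
  | TOne => one M
  | TAdd t u => add M (eval M e t) (eval M e u)
  | TSub t u => sub M (eval M e t) (eval M e u)
  end.

Fixpoint sat (M : PStruct) (e : nat -> car M) (p : formula) : Prop :=
  match p with
  | FEq t u => eval M e t = eval M e u
  | FLt t u => lt M (eval M e t) (eval M e u)
  | FCong n t u => cong M n (eval M e t) (eval M e u)
  | FFalse => False
  | FNot p => ~ sat M e p
  | FAnd p q => sat M e p /\ sat M e q
  | FOr p q => sat M e p \/ sat M e q
  | FEx n p => exists b, sat M (upd e n b) p
  | FAll n p => forall b, sat M (upd e n b) p
  end.

Definition Zstr : PStruct := {|
  car := Z; zero := 0%Z; one := 1%Z; add := Z.add; sub := Z.sub;
  lt := Z.lt; cong := fun n x y => Z.divide (Zpos n) (x - y)%Z |}.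

(* M |= Th(Z): every formula valid in Z (i.e. whose universal closure is
   in Th(Z)) is valid in M. *)
Definition presburger_model (M : PStruct) : Prop :=
  forall p : formula, (forall e : nat -> Z, sat Zstr e p) ->
    forall e : nat -> car M, sat M e p.

Definition elementary_emb (M0 M : PStruct) (f : car M0 -> car M) : Prop :=
  forall (p : formula) (e : nat -> car M0),
    sat M0 e p <-> sat M (fun i => f (e i)) p.

Definition small_subset (M : PStruct) (A : car M -> Prop) : Prop :=
  ~ exists g : car M -> {x : car M | A x},
      forall x y, g x = g y -> x = y.

Definition small_model (M0 M : PStruct) : Prop :=
  ~ exists g : car M -> car M0, forall x y, g x = g y -> x = y.

(* A "formula with parameters" is a pair (p, e). *)
Definition saturated (M : PStruct) : Prop :=
  forall (A : car M -> Prop), small_subset M A ->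
  forall (P : formula -> (nat -> car M) -> Prop),
    (forall p e, P p e -> forall i, i <> 0 -> A (e i)) ->
    (forall l : list (formula * (nat -> car M)),
        (forall q, In q l -> P (fst q) (snd q)) ->
        exists b, forall q, In q l -> sat M (upd (snd q) 0 b) (fst q)) ->
    exists b, forall p e, P p e -> sat M (upd e 0 b) p.

(* phi(M, a) where x = v_0 and a = (a 0, ..., a (k-1)) is substituted for
   v_1, ..., v_k; remaining variables are set to 0 (a 0-definable constant). *)
Definition defset (M : PStruct) (phi : formula) (k : nat) (a : nat -> car M)
  : car M -> Prop :=
  fun x => sat M (fun i => match i with
                           | 0 => x
                           | S j => if Nat.ltb j k then a j else zero M
                           end) phi.

Definition le (M : PStruct) (x y : car M) : Prop := lt M x y \/ x = y.

Definition numeral (M : PStruct) (c : nat) : car M :=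
  Nat.iter c (fun y => add M y (one M)) (zero M).

Definition infinite_set (M : PStruct) (S : car M -> Prop) : Prop :=
  ~ exists l : list (car M), forall x, S x -> In x l.

Definition single_point (M : PStruct) (S : car M -> Prop) : Prop :=
  exists p, forall x, S x <-> x = p.

Definition bounded_1cell (M : PStruct) (S : car M -> Prop) : Prop :=
  exists (alpha beta : car M) (N : positive) (c : nat),
    c < Pos.to_nat N /\
    (forall x, S x <-> le M alpha x /\ le M x beta /\ cong M N x (numeral M c)) /\
    infinite_set M S.

Definition same_type (M0 M : PStruct) (f : car M0 -> car M) (k : nat)
  (a a' : nat -> car M) : Prop :=
  forall (p : formula) (e : nat -> car M0),
    sat M (fun i => if Nat.ltb i k then a i else f (e i)) p <->
    sat M (fun i => if Nat.ltb i k then a' i else f (e i)) p.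

(* Let [S = phi(M, a)] and let [[al, be]] be its convex hull. No point of [M0]
   lies in [[al, be]]: for a cell, rounding such a point to the congruence class
   inside [M0] would produce a point of [S] in [M0]. It suffices to realize
   [tp(a/M0)] by some [a'] with [phi(M, a') < al]. By saturation this reduces to:
   every formula [theta(y)] of [tp(a/M0)] has a solution [y] with [phi(M, y) < al].
   Otherwise the [M0]-definable set of those [z] for which [phi(M, y) < z] for some
   solution [y] of [theta] is nonempty (it contains [be + 1]) and bounded below by
   [al]; its least element [z] then lies in [M0] and [al < z <= be + 1], so [z - 1]
   is a point of [M0] in [[al, be]].
   Saturation is only assumed for one variable, so types of [k]-tuples are realized
   one coordinate at a time; finitely many formulas with different parameters are
   conjoined by interleaving their environments. *)

From Stdlib Require Import ZArith List Arith Lia FinFun.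
From Stdlib Require Import Classical ClassicalEpsilon ProofIrrelevance.
Import ListNotations.

Ltac nat_cases :=
  repeat match goal with
         | |- context [?i =? ?j] => destruct (Nat.eqb_spec i j)
         | |- context [?i <? ?j] => destruct (Nat.ltb_spec i j)
         | _ : context [?i =? ?j] |- _ => destruct (Nat.eqb_spec i j)
         end; subst; auto; try lia.

(** * Renaming variables *)

Fixpoint trename (s : nat -> nat) (t : term) : term :=
  match t with
  | TVar n => TVar (s n)
  | TZero => TZero
  | TOne => TOne
  | TAdd t u => TAdd (trename s t) (trename s u)
  | TSub t u => TSub (trename s t) (trename s u)
  end.

Fixpoint rename (s : nat -> nat) (p : formula) : formula :=
  match p with
  | FEq t u => FEq (trename s t) (trename s u)
  | FLt t u => FLt (trename s t) (trename s u)
  | FCong n t u => FCong n (trename s t) (trename s u)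
  | FFalse => FFalse
  | FNot p => FNot (rename s p)
  | FAnd p q => FAnd (rename s p) (rename s q)
  | FOr p q => FOr (rename s p) (rename s q)
  | FEx n p => FEx (s n) (rename s p)
  | FAll n p => FAll (s n) (rename s p)
  end.

Lemma eval_ext M e e' t : (forall i, e i = e' i) -> eval M e t = eval M e' t.
Proof. intros H; induction t; simpl; congruence. Qed.

Lemma upd_ext {M : PStruct} (e e' : nat -> car M) n b :
  (forall i, e i = e' i) -> forall i, upd e n b i = upd e' n b i.
Proof. intros H i; unfold upd; destruct (i =? n); auto. Qed.

Lemma sat_ext M p : forall e e', (forall i, e i = e' i) -> (sat M e p <-> sat M e' p).
Proof.
  induction p; intros e e' H; simpl; try (rewrite !(eval_ext M e e' _ H); tauto).
  - tauto.
  - rewrite (IHp e e' H); tauto.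
  - rewrite (IHp1 e e' H), (IHp2 e e' H); tauto.
  - rewrite (IHp1 e e' H), (IHp2 e e' H); tauto.
  - split; intros [b Hb]; exists b; revert Hb; apply IHp, upd_ext; auto.
  - split; intros Hb b; generalize (Hb b); apply IHp, upd_ext; auto.
Qed.

Lemma eval_rename M s e t : eval M e (trename s t) = eval M (fun i => e (s i)) t.
Proof. induction t; simpl; congruence. Qed.

Lemma upd_rename {M : PStruct} (s : nat -> nat) (e : nat -> car M) n b : Injective s ->
  forall i, upd e (s n) b (s i) = upd (fun j => e (s j)) n b i.
Proof.
  intros Hs i; unfold upd.
  destruct (Nat.eqb_spec (s i) (s n)) as [E|E], (Nat.eqb_spec i n); subst; auto.
  - apply Hs in E; congruence.
  - congruence.
Qed.

Lemma sat_rename M s p : Injective s ->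
  forall e, sat M e (rename s p) <-> sat M (fun i => e (s i)) p.
Proof.
  intros Hs; induction p; intros e; simpl; try (rewrite !eval_rename; tauto).
  - tauto.
  - rewrite IHp; tauto.
  - rewrite IHp1, IHp2; tauto.
  - rewrite IHp1, IHp2; tauto.
  - split; intros [b Hb]; exists b; revert Hb; rewrite IHp;
      apply sat_ext; intro i; rewrite upd_rename; auto.
  - split; intros Hb b; generalize (Hb b); rewrite IHp;
      apply sat_ext; intro i; rewrite upd_rename; auto.
Qed.

(** * Gluing environments *)

Definition merge {X : Type} (k : nat) (y e : nat -> X) : nat -> X :=
  fun i => if i <? k then y i else e i.

Fixpoint ex_prefix (k : nat) (p : formula) : formula :=
  match k with 0 => p | S k => ex_prefix k (FEx k p) end.

Lemma sat_ex_prefix M k : forall p e,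
  sat M e (ex_prefix k p) <-> exists y, sat M (merge k y e) p.
Proof.
  induction k; intros p e; simpl.
  - split; [intros H; exists e; exact H | intros [y Hy]; exact Hy].
  - rewrite IHk; simpl; split.
    + intros [y [b Hb]]; exists (upd y k b); revert Hb; apply sat_ext; intro i.
      unfold upd, merge; nat_cases.
    + intros [y Hy]; exists y, (y k); revert Hy; apply sat_ext; intro i.
      unfold upd, merge; nat_cases.
Qed.

Definition interleave {X : Type} (K : nat) (d : X) (e1 e2 : nat -> X) : nat -> X :=
  fun i => if i <? K then d
           else if Nat.even (i - K) then e1 (K + Nat.div2 (i - K))
           else e2 (K + Nat.div2 (i - K)).

Definition left_slot (K i : nat) : nat := if i <? K then i else K + 2 * (i - K).
Definition right_slot (K i : nat) : nat := if i <? K then i else K + 2 * (i - K) + 1.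

Lemma left_slot_inj K : Injective (left_slot K).
Proof. intros i j; unfold left_slot; nat_cases. Qed.

Lemma right_slot_inj K : Injective (right_slot K).
Proof. intros i j; unfold right_slot; nat_cases. Qed.

Lemma interleave_even {X} K (d : X) e1 e2 q : interleave K d e1 e2 (K + 2 * q) = e1 (K + q).
Proof.
  unfold interleave; destruct (Nat.ltb_spec (K + 2 * q) K); [lia|].
  replace (K + 2 * q - K) with (2 * q) by lia.
  now rewrite Nat.even_even, Nat.div2_double.
Qed.

Lemma interleave_odd {X} K (d : X) e1 e2 q : interleave K d e1 e2 (K + 2 * q + 1) = e2 (K + q).
Proof.
  unfold interleave; destruct (Nat.ltb_spec (K + 2 * q + 1) K); [lia|].
  replace (K + 2 * q + 1 - K) with (2 * q + 1) by lia.
  now rewrite Nat.even_odd, Nat.div2_odd'.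
Qed.

Lemma merge_interleave_left {X} K (y : nat -> X) d e1 e2 i :
  merge K y (interleave K d e1 e2) (left_slot K i) = merge K y e1 i.
Proof.
  unfold merge, left_slot; destruct (Nat.ltb_spec i K).
  - now rewrite (proj2 (Nat.ltb_lt i K)).
  - destruct (Nat.ltb_spec (K + 2 * (i - K)) K); [lia|].
    rewrite interleave_even; f_equal; lia.
Qed.

Lemma merge_interleave_right {X} K (y : nat -> X) d e1 e2 i :
  merge K y (interleave K d e1 e2) (right_slot K i) = merge K y e2 i.
Proof.
  unfold merge, right_slot; destruct (Nat.ltb_spec i K).
  - now rewrite (proj2 (Nat.ltb_lt i K)).
  - destruct (Nat.ltb_spec (K + 2 * (i - K) + 1) K); [lia|].
    rewrite interleave_odd; f_equal; lia.
Qed.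

Lemma upd_interleave_right {M : PStruct} K (d : car M) e1 e2 i b : K <= i ->
  forall j, upd (interleave K d e1 e2) (right_slot K i) b j = interleave K d e1 (upd e2 i b) j.
Proof.
  intros Hi j; unfold upd, right_slot; destruct (Nat.ltb_spec i K); [lia|].
  destruct (Nat.ltb_spec j K).
  - destruct (Nat.eqb_spec j (K + 2 * (i - K) + 1)); [lia|].
    unfold interleave; now rewrite (proj2 (Nat.ltb_lt j K)).
  - destruct (Nat.Even_or_Odd (j - K)) as [[q Hq]|[q Hq]].
    + replace j with (K + 2 * q) by lia; rewrite !interleave_even.
      destruct (Nat.eqb_spec (K + 2 * q) (K + 2 * (i - K) + 1)); [lia | auto].
    + replace j with (K + 2 * q + 1) by lia; rewrite !interleave_odd.
      destruct (Nat.eqb_spec (K + 2 * q + 1) (K + 2 * (i - K) + 1)),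
               (Nat.eqb_spec (K + q) i); auto; lia.
Qed.

Lemma interleave_map {X Y} (f : X -> Y) K d e1 e2 i :
  f (interleave K d e1 e2 i) = interleave K (f d) (fun j => f (e1 j)) (fun j => f (e2 j)) i.
Proof. unfold interleave; destruct (i <? K), (Nat.even (i - K)); auto. Qed.

Lemma interleave_forall {X} (P : X -> Prop) K d e1 e2 : P d ->
  (forall i, K <= i -> P (e1 i)) -> (forall i, K <= i -> P (e2 i)) ->
  forall i, P (interleave K d e1 e2 i).
Proof.
  intros Hd H1 H2 i; unfold interleave; destruct (Nat.ltb_spec i K); auto.
  destruct (Nat.even (i - K)); [apply H1 | apply H2]; apply Nat.le_add_r.
Qed.

(* A conjunction of [p] and [q] that evaluates them in different environments
   sharing the first [K] variables. *)
Definition and_split (K : nat) (p q : formula) : formula :=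
  FAnd (rename (left_slot K) p) (rename (right_slot K) q).

Lemma sat_and_split M K y d e1 e2 p q :
  sat M (merge K y (interleave K d e1 e2)) (and_split K p q) <->
  sat M (merge K y e1) p /\ sat M (merge K y e2) q.
Proof.
  unfold and_split; simpl.
  rewrite sat_rename by apply left_slot_inj; rewrite sat_rename by apply right_slot_inj.
  rewrite (sat_ext M p _ (merge K y e1)) by (intro; apply merge_interleave_left).
  rewrite (sat_ext M q _ (merge K y e2)) by (intro; apply merge_interleave_right).
  tauto.
Qed.

Definition and_list {X : Type} (K : nat) (l : list (formula * X)) : formula :=
  fold_right (fun r q => and_split K (fst r) q) (FNot FFalse) l.

Definition env_list {X : Type} (K : nat) (d : X) (l : list (formula * (nat -> X))) : nat -> X :=
  fold_right (fun r e => interleave K d (snd r) e) (fun _ => d) l.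

Lemma sat_and_list M K d l y :
  sat M (merge K y (env_list K d l)) (and_list K l) <->
  forall r, In r l -> sat M (merge K y (snd r)) (fst r).
Proof.
  induction l as [|r l IH]; cbn [and_list env_list fold_right In].
  - simpl; split; [intros _ q [] | intros _ []].
  - rewrite sat_and_split, IH.
    split; [intros [H1 H2] q [<-|Hq]; auto | intros H; split; auto].
Qed.

Lemma and_list_map {X Y} K (g : X -> Y) l :
  and_list K (map (fun r => (fst r, g (snd r))) l) = and_list K l.
Proof. induction l; simpl; congruence. Qed.

Lemma env_list_map {X Y} (f : X -> Y) K d l i :
  f (env_list K d l i) = env_list K (f d) (map (fun r => (fst r, fun j => f (snd r j))) l) i.
Proof.
  revert i; induction l as [|r l IH]; intros i; simpl; auto.
  rewrite interleave_map; unfold interleave; destruct (i <? K), (Nat.even (i - K)); auto.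
Qed.

Lemma sat_and_list_map M {X} (g : X -> car M) K d (l : list (formula * (nat -> X))) y :
  sat M (merge K y (fun i => g (env_list K d l i))) (and_list K l) <->
  forall r, In r l -> sat M (merge K y (fun i => g (snd r i))) (fst r).
Proof.
  set (gl := map (fun r => (fst r, fun i => g (snd r i))) l).
  assert (Henv : forall i, merge K y (fun i => g (env_list K d l i)) i =
                           merge K y (env_list K (g d) gl) i)
    by (intro i; unfold merge; rewrite env_list_map; reflexivity).
  assert (Hform : and_list K l = and_list K gl)
    by (symmetry; apply (and_list_map K (fun e i => g (e i)))).
  rewrite (sat_ext _ _ _ _ Henv), Hform, sat_and_list.
  split; intros H r Hr.
  - exact (H (fst r, fun i => g (snd r i)) (in_map _ l r Hr)).
  - apply in_map_iff in Hr as [r' [<- Hr']]; exact (H r' Hr').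
Qed.

Lemma env_list_forall {X} (P : X -> Prop) K d l : P d ->
  (forall r, In r l -> forall i, K <= i -> P (snd r i)) -> forall i, P (env_list K d l i).
Proof.
  intros Hd; induction l as [|r l IH]; intros Hl i; simpl; auto.
  apply interleave_forall; auto.
  - apply Hl; left; auto.
  - intros j _; apply IH; intros; apply Hl; auto; right; auto.
Qed.

(** * Presburger arithmetic *)

Definition FLe (t u : term) : formula := FOr (FLt t u) (FEq t u).

Lemma sat_FLe M e i j : sat M e (FLe (TVar i) (TVar j)) <-> le M (e i) (e j).
Proof. reflexivity. Qed.

Fixpoint tnumeral (n : nat) : term :=
  match n with 0 => TZero | S n => TAdd (tnumeral n) TOne end.

Lemma eval_tnumeral M e n : eval M e (tnumeral n) = numeral M n.
Proof. induction n; simpl; congruence. Qed.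

Lemma numeral_Z n : numeral Zstr n = Z.of_nat n.
Proof. induction n; [reflexivity|]. change (numeral Zstr n + 1 = Z.of_nat (S n))%Z. lia. Qed.

Definition env_of {M : PStruct} (xs : list (car M)) : nat -> car M :=
  fun i => nth i xs (zero M).

(* [p] must be valid in Z (checked by [lia]); its instance at [xs] closes the goal. *)
Ltac presburger HM p xs :=
  let H := fresh in
  pose proof (HM p ltac:(intro; simpl; lia) (env_of xs)) as H;
  simpl in H; unfold le; tauto.

Section Order.
Variable M : PStruct.
Hypothesis HM : presburger_model M.

Lemma lt_add1_of_le x y : le M x y -> lt M x (add M y (one M)).
Proof.
  presburger HM (FOr (FNot (FLe (TVar 0) (TVar 1))) (FLt (TVar 0) (TAdd (TVar 1) TOne))) [x; y].
Qed.

Lemma lt_of_lt_of_nlt x y z : ~ lt M y z -> lt M x z -> lt M x y.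
Proof.
  presburger HM (FOr (FLt (TVar 1) (TVar 2))
                     (FOr (FNot (FLt (TVar 0) (TVar 2))) (FLt (TVar 0) (TVar 1)))) [x; y; z].
Qed.

Lemma sub1_between x y u : lt M x u -> ~ lt M (add M y (one M)) u ->
  le M x (sub M u (one M)) /\ le M (sub M u (one M)) y.
Proof.
  presburger HM (FOr (FNot (FLt (TVar 0) (TVar 2))) (FOr (FLt (TAdd (TVar 1) TOne) (TVar 2))
    (FAnd (FLe (TVar 0) (TSub (TVar 2) TOne)) (FLe (TSub (TVar 2) TOne) (TVar 1))))) [x; y; u].
Qed.

Lemma le_nlt x y : le M x y -> ~ lt M y x.
Proof.
  presburger HM (FOr (FNot (FLe (TVar 0) (TVar 1))) (FNot (FLt (TVar 1) (TVar 0)))) [x; y].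
Qed.

Lemma le_antisym x y : le M x y -> le M y x -> x = y.
Proof.
  presburger HM (FOr (FNot (FAnd (FLe (TVar 0) (TVar 1)) (FLe (TVar 1) (TVar 0))))
                     (FEq (TVar 0) (TVar 1))) [x; y].
Qed.

Lemma double_inj x y : add M x x = add M y y -> x = y.
Proof.
  presburger HM (FOr (FNot (FEq (TAdd (TVar 0) (TVar 0)) (TAdd (TVar 1) (TVar 1))))
                     (FEq (TVar 0) (TVar 1))) [x; y].
Qed.

Lemma double_neq_one x : add M x x <> one M.
Proof. presburger HM (FNot (FEq (TAdd (TVar 0) (TVar 0)) TOne)) [x]. Qed.

End Order.

Lemma presburger_elementary M0 M (f : car M0 -> car M) :
  presburger_model M -> elementary_emb M0 M f -> presburger_model M0.
Proof. intros HM Hel p Hp e; apply Hel, HM, Hp. Qed.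

Lemma elementary_zero M0 M (f : car M0 -> car M) :
  elementary_emb M0 M f -> f (zero M0) = zero M.
Proof. intros Hel; exact (proj1 (Hel (FEq (TVar 0) TZero) (fun _ => zero M0)) eq_refl). Qed.

Lemma elementary_sub1 M0 M (f : car M0 -> car M) u :
  elementary_emb M0 M f -> f (sub M0 u (one M0)) = sub M (f u) (one M).
Proof.
  intros Hel.
  exact (proj1 (Hel (FEq (TVar 0) (TSub (TVar 1) TOne)) (env_of [sub M0 u (one M0); u])) eq_refl).
Qed.

Lemma Z_least_element (P : Z -> Prop) :
  (exists z, P z) -> (exists w, forall z, P z -> (w <= z)%Z) ->
  exists z, P z /\ forall w, (w < z)%Z -> ~ P w.
Proof.
  intros [z0 Hz0] [w Hw]; apply NNPP; intros Hno.
  assert (H : forall z, (w <= z)%Z -> ~ P z).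
  { intros z; induction z as [z IH] using (well_founded_ind (Z.lt_wf w)); intros Hz Pz.
    apply Hno; exists z; split; auto; intros v Hv Pv.
    exact (IH v (conj (Hw v Pv) Hv) (Hw v Pv) Pv). }
  exact (H z0 (Hw z0 Hz0) Hz0).
Qed.

Definition scons {X : Type} (d : X) (e : nat -> X) : nat -> X :=
  fun i => match i with 0 => d | S j => e j end.

Definition to_front (n i : nat) : nat := if i =? n then 0 else S i.

Lemma S_injective : Injective S.
Proof. exact Nat.succ_inj. Qed.

Lemma to_front_inj n : Injective (to_front n).
Proof. intros i j; unfold to_front; nat_cases. Qed.

Section LeastElement.
Variables (n : nat) (psi : formula).

(* Variable [0] is kept free for the competitor [w]; the variables of [psi]
   are shifted up by one, so parameters are read from [scons _ e]. *)
Definition least_body : formula :=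
  FAnd (rename S psi)
       (FAll 0 (FOr (FNot (FLt (TVar 0) (TVar (S n)))) (FNot (rename (to_front n) psi)))).

Definition least_schema : formula :=
  FOr (FNot (FAnd (FEx (S n) (rename S psi))
                  (FEx 0 (FAll (S n) (FOr (FNot (rename S psi)) (FLe (TVar 0) (TVar (S n))))))))
      (FEx (S n) least_body).

Lemma sat_shift M E e z : (forall i, E (S i) = upd e n z i) ->
  sat M E (rename S psi) <-> sat M (upd e n z) psi.
Proof. intros H; rewrite sat_rename by apply S_injective; apply sat_ext, H. Qed.

Lemma sat_to_front M (E e : nat -> car M) w : E 0 = w -> (forall i, i <> n -> E (S i) = e i) ->
  sat M E (rename (to_front n) psi) <-> sat M (upd e n w) psi.
Proof.
  intros H0 HS; rewrite sat_rename by apply to_front_inj; apply sat_ext; intro i.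
  unfold to_front, upd; destruct (Nat.eqb_spec i n); auto.
Qed.

Lemma upd_scons_S {M : PStruct} (d : car M) e z b i :
  upd (upd (scons d e) (S n) z) 0 b (S i) = upd e n z i /\
  upd (upd (scons d e) 0 b) (S n) z (S i) = upd e n z i.
Proof. unfold upd; simpl; destruct (i =? n); auto. Qed.

Lemma sat_least_body M (d : car M) e z :
  sat M (upd (scons d e) (S n) z) least_body <->
  sat M (upd e n z) psi /\ forall w, lt M w z -> ~ sat M (upd e n w) psi.
Proof.
  set (E w := upd (upd (scons d e) (S n) z) 0 w).
  assert (HE : forall w, E w 0 = w /\ E w (S n) = z)
    by (intros w; unfold E, upd; simpl; rewrite Nat.eqb_refl; auto).
  assert (Hfront : forall w, sat M (E w) (rename (to_front n) psi) <-> sat M (upd e n w) psi).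
  { intros w; apply sat_to_front; [apply HE|].
    intros i Hi; unfold E, upd; simpl; destruct (Nat.eqb_spec i n); congruence. }
  unfold least_body; cbn [sat eval].
  rewrite sat_shift by (intro i; apply (upd_scons_S d e z z i)).
  split; intros [Hz Hmin]; split; auto; intros w.
  - intros Hlt Hpsi; destruct (Hmin w) as [H|H]; apply H.
    + change (lt M (E w 0) (E w (S n))); destruct (HE w) as [-> ->]; exact Hlt.
    + apply Hfront; exact Hpsi.
  - destruct (classic (lt M w z)) as [Hlt|Hlt].
    + right; change (~ sat M (E w) (rename (to_front n) psi)); rewrite Hfront; exact (Hmin w Hlt).
    + left; change (~ lt M (E w 0) (E w (S n))); destruct (HE w) as [-> ->]; exact Hlt.
Qed.

Lemma sat_least_schema M (d : car M) e :
  sat M (scons d e) least_schema <->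
  ((exists z, sat M (upd e n z) psi) ->
   (exists w, forall z, sat M (upd e n z) psi -> le M w z) ->
   exists z, sat M (upd e n z) psi /\ forall w, lt M w z -> ~ sat M (upd e n w) psi).
Proof.
  assert (Hvar : forall w z, upd (upd (scons d e) 0 w) (S n) z 0 = w /\
                             upd (upd (scons d e) 0 w) (S n) z (S n) = z)
    by (intros w z; unfold upd; simpl; rewrite Nat.eqb_refl; auto).
  unfold least_schema; cbn [sat].
  assert (HNE : (exists z, sat M (upd (scons d e) (S n) z) (rename S psi)) <->
                exists z, sat M (upd e n z) psi).
  { split; intros [z Hz]; exists z; revert Hz; apply sat_shift;
      intro i; unfold upd; simpl; destruct (i =? n); auto. }
  assert (HBD : (exists w, forall z, ~ sat M (upd (upd (scons d e) 0 w) (S n) z) (rename S psi) \/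
                   sat M (upd (upd (scons d e) 0 w) (S n) z) (FLe (TVar 0) (TVar (S n)))) <->
                exists w, forall z, sat M (upd e n z) psi -> le M w z).
  { split; intros [w Hw]; exists w; intros z; specialize (Hw z);
      rewrite sat_FLe, (proj1 (Hvar w z)), (proj2 (Hvar w z)) in *;
      rewrite sat_shift in * by (intro i; apply (upd_scons_S d e z w i)); tauto. }
  assert (HMIN : (exists z, sat M (upd (scons d e) (S n) z) least_body) <->
                 exists z, sat M (upd e n z) psi /\ forall w, lt M w z -> ~ sat M (upd e n w) psi).
  { split; intros [z Hz]; exists z; revert Hz; apply sat_least_body. }
  rewrite HNE, HBD, HMIN; tauto.
Qed.

Lemma least_schema_Z e : sat Zstr e least_schema.
Proof.
  rewrite (sat_ext _ _ e (scons (e 0) (fun i => e (S i)))) by (intros [|i]; reflexivity).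
  apply sat_least_schema; intros Hne [w Hw].
  apply Z_least_element; auto.
  exists w; intros z Hz; destruct (Hw z Hz) as [H|H]; simpl in H; lia.
Qed.

End LeastElement.

Lemma least_in_elementary_submodel M0 M (f : car M0 -> car M) (n : nat) (psi : formula)
  (e0 : nat -> car M0) :
  presburger_model M -> elementary_emb M0 M f ->
  let D z := sat M (upd (fun i => f (e0 i)) n z) psi in
  (exists z, D z) -> (exists w, forall z, D z -> le M w z) ->
  exists u, D (f u) /\ forall w, lt M w (f u) -> ~ D w.
Proof.
  intros HM Hel D Hne Hbd.
  assert (HE : forall i, f (scons (e0 0) e0 i) = scons (f (e0 0)) (fun i => f (e0 i)) i)
    by (intros [|i]; reflexivity).
  assert (Hmin : sat M (scons (f (e0 0)) (fun i => f (e0 i))) (FEx (S n) (least_body n psi))).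
  { pose proof (HM _ (least_schema_Z n psi) (scons (f (e0 0)) (fun i => f (e0 i)))) as Hschema.
    rewrite sat_least_schema in Hschema; destruct (Hschema Hne Hbd) as [z Hz].
    exists z; apply sat_least_body; exact Hz. }
  rewrite <- (sat_ext _ _ _ _ HE) in Hmin; apply Hel in Hmin; destruct Hmin as [u Hu].
  exists u; apply (sat_least_body n psi M (f (e0 0))).
  apply Hel in Hu; revert Hu; apply sat_ext; intro i.
  unfold upd; destruct (i =? S n); auto.
Qed.

Lemma Z_cell_step (al be m x z N c : Z) : (0 < N)%Z ->
  (al <= x <= be)%Z -> (N | x - c)%Z -> (al <= m <= be)%Z ->
  (N | z - c)%Z -> (z <= m < z + N)%Z ->
  (al <= z <= be)%Z \/ (al <= z + N <= be)%Z.
Proof.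
  intros HN Hx [q Hq] Hm [r Hr] Hz.
  destruct (Z_lt_le_dec z al); [|left; lia].
  destruct (Z_lt_le_dec be (z + N)); [|right; lia].
  exfalso; destruct (Z_le_gt_dec (q - r) 0); nia.
Qed.

Definition FCell (N : positive) (c : nat) (al be t : term) : formula :=
  FAnd (FLe al t) (FAnd (FLe t be) (FCong N t (tnumeral c))).

Definition FFloor (N : positive) (c : nat) (m z w : term) : formula :=
  FAnd (FCong N z (tnumeral c))
       (FAnd (FLe z m) (FAnd (FLt m w) (FEq w (TAdd z (tnumeral (Pos.to_nat N)))))).

Lemma cell_hull_avoids M0 M (f : car M0 -> car M) al be N c :
  presburger_model M -> elementary_emb M0 M f ->
  let cell x := le M al x /\ le M x be /\ cong M N x (numeral M c) in
  (exists x, cell x) -> (forall m, ~ cell (f m)) ->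
  forall m, le M al (f m) -> le M (f m) be -> False.
Proof.
  intros HM Hel cell [x Hx] Hout m Hal Hbe.
  assert (Hfloor : sat M0 (env_of [m]) (FEx 1 (FEx 2 (FFloor N c (TVar 0) (TVar 1) (TVar 2))))).
  { apply (presburger_elementary M0 M f HM Hel); intro e; unfold FFloor, FLe; simpl.
    set (z := (e O - (e O - Z.of_nat c) mod Z.pos N)%Z).
    exists z, (z + Z.pos N)%Z; unfold upd; simpl.
    rewrite !eval_tnumeral, !numeral_Z, positive_nat_Z.
    pose proof (Z.mod_pos_bound (e O - Z.of_nat c) (Z.pos N)).
    pose proof (Z.div_mod (e O - Z.of_nat c) (Z.pos N)).
    split; [exists ((e O - Z.of_nat c) / Z.pos N)%Z|]; unfold z; lia. }
  destruct Hfloor as [z [w Hzw]]; apply Hel in Hzw.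
  assert (Hstep : forall e, sat Zstr e
    (FOr (FNot (FAnd (FCell N c (TVar 0) (TVar 1) (TVar 2))
                     (FAnd (FLe (TVar 0) (TVar 3))
                           (FAnd (FLe (TVar 3) (TVar 1)) (FFloor N c (TVar 3) (TVar 4) (TVar 5))))))
         (FOr (FCell N c (TVar 0) (TVar 1) (TVar 4)) (FCell N c (TVar 0) (TVar 1) (TVar 5))))).
  { intro e; unfold FCell, FFloor, FLe; simpl; rewrite !eval_tnumeral, !numeral_Z, positive_nat_Z.
    apply imply_to_or; intros [[Hx1 [Hx2 Hx3]] [Hm1 [Hm2 [Hz1 [Hz2 [Hz3 Hz4]]]]]].
    destruct (Z_cell_step (e 0%nat) (e 1%nat) (e 3%nat) (e 2%nat) (e 4%nat) (Z.pos N) (Z.of_nat c)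
                ltac:(lia) ltac:(lia) Hx3 ltac:(lia) Hz1 ltac:(lia)) as [H|H]; [left | right].
    - repeat split; auto; lia.
    - repeat split; try lia; destruct Hz1 as [q Hq]; exists (q + 1)%Z; lia. }
  pose proof (HM _ Hstep (env_of [al; be; x; f m; f z; f w])) as Hcell; clear Hstep.
  unfold FCell, FFloor, cell, env_of, upd, le in *; simpl in *; rewrite !eval_tnumeral in *.
  destruct Hcell as [Hcell | [Hcell | Hcell]].
  - apply Hcell; tauto.
  - apply (Hout z); tauto.
  - apply (Hout w); tauto.
Qed.

(** * Realizing types of tuples in a saturated model *)

Lemma small_subset_add (M : PStruct) (h : car M -> car M) (z0 : car M) :
  Injective h -> (forall x, h x <> z0) ->
  forall B b, small_subset M B -> small_subset M (fun x => B x \/ x = b).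
Proof.
  intros Hh Hz0 B b HB [g Hg]; apply HB.
  assert (HG : exists G : car M -> {x | B x \/ x = b},
             Injective G /\ forall x, proj1_sig (G x) <> b).
  { destruct (classic (exists x0, proj1_sig (g x0) = b)) as [[x0 Hx0]|Hno].
    - (* the transposition of [z0] and [x0] sends the range of [h] away from [x0] *)
      set (tau x := if excluded_middle_informative (x = z0) then x0
                    else if excluded_middle_informative (x = x0) then z0 else x).
      exists (fun x => g (tau (h x))); split.
      + intros x y E; apply Hg in E; apply Hh; revert E; unfold tau.
        destruct (excluded_middle_informative (h x = z0)), (excluded_middle_informative (h y = z0)),
                 (excluded_middle_informative (h x = x0)), (excluded_middle_informative (h y = x0));
          congruence.
      + intros x E; rewrite <- Hx0 in E.
        apply (eq_sig_hprop (fun _ => proof_irrelevance _)), Hg in E.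
        revert E; unfold tau.
        destruct (excluded_middle_informative (h x = z0)); [apply Hz0 in e; contradiction|].
        destruct (excluded_middle_informative (h x = x0)); congruence.
    - exists g; split; auto; intros x E; apply Hno; eauto. }
  destruct HG as [G [HGinj HGb]].
  assert (HB' : forall x, B (proj1_sig (G x)))
    by (intro x; destruct (proj2_sig (G x)) as [H|H]; [exact H | contradiction (HGb x H)]).
  exists (fun x => exist _ _ (HB' x)); intros x y E.
  apply HGinj, (eq_sig_hprop (fun _ => proof_irrelevance _)).
  exact (f_equal (@proj1_sig _ _) E).
Qed.

Lemma presburger_small_subset_add M : presburger_model M ->
  forall B b, small_subset M B -> small_subset M (fun x => B x \/ x = b).
Proof.
  intros HM; apply (small_subset_add M (fun x => add M x x) (one M)).
  - intros x y; apply double_inj; auto.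
  - apply double_neq_one; auto.
Qed.

Lemma small_range M0 M (f : car M0 -> car M) :
  small_model M0 M -> small_subset M (fun x => exists m, f m = x).
Proof.
  intros H0 [g Hg]; apply H0.
  exists (fun x => proj1_sig (constructive_indefinite_description _ (proj2_sig (g x)))).
  intros x y E.
  destruct (constructive_indefinite_description _ (proj2_sig (g x))) as [m1 E1].
  destruct (constructive_indefinite_description _ (proj2_sig (g y))) as [m2 E2]; simpl in E.
  apply Hg, (eq_sig_hprop (fun _ => proof_irrelevance _)); congruence.
Qed.

Lemma list_preimage {A B : Type} (g : B -> A) (P : B -> Prop) (l : list A) :
  (forall q, In q l -> exists r, P r /\ q = g r) ->
  exists L, (forall r, In r L -> P r) /\ l = map g L.
Proof.
  induction l as [|q l IH]; intros Hl.
  - exists []; split; [intros _ [] | reflexivity].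
  - destruct (Hl q (or_introl eq_refl)) as [r [Hr ->]].
    destruct IH as [L [HL ->]]; [intros; apply Hl; right; auto|].
    exists (r :: L); split; [intros r' [<-|Hr']; auto | reflexivity].
Qed.

Definition finitely_satisfiable (M : PStruct) (k : nat)
  (Phi : formula -> (nat -> car M) -> Prop) : Prop :=
  forall l, (forall q, In q l -> Phi (fst q) (snd q)) ->
  exists y, forall q, In q l -> sat M (merge k y (snd q)) (fst q).

Definition swap0 (k i : nat) : nat := if i =? 0 then k else if i =? k then 0 else i.

Lemma swap0_inj k : Injective (swap0 k).
Proof. intros i j; unfold swap0; nat_cases. Qed.

Lemma merge_upd {M : PStruct} k (y e : nat -> car M) b i :
  merge k y (upd e k b) i = merge (S k) (upd y k b) e i.
Proof. unfold merge, upd; nat_cases. Qed.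

Section Realize.
Variable M : PStruct.
Hypothesis HM : presburger_model M.
Hypothesis Hsat : saturated M.
Variable d : car M.

(* Variable 0 plays [y k] for some [y] satisfying all of [l]; it is moved there
   because [saturated] realizes variable 0. *)
Definition last_coordinate (k : nat) (l : list (formula * (nat -> car M))) : formula :=
  rename (swap0 k) (ex_prefix k (and_list (S k) l)).

Lemma sat_last_coordinate k l b :
  sat M (upd (env_list (S k) d l) 0 b) (last_coordinate k l) <->
  exists y, forall r, In r l -> sat M (merge (S k) (upd y k b) (snd r)) (fst r).
Proof.
  unfold last_coordinate; rewrite sat_rename, sat_ex_prefix by apply swap0_inj.
  assert (Hglue : forall y i, merge k y (fun j => upd (env_list (S k) d l) 0 b (swap0 k j)) i =
                              merge (S k) (upd y k b) (env_list (S k) d l) i).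
  { intros y i; unfold merge, upd, swap0; nat_cases. }
  split; intros [y Hy]; exists y.
  - rewrite (sat_ext _ _ _ _ (Hglue y)), sat_and_list in Hy; exact Hy.
  - rewrite (sat_ext _ _ _ _ (Hglue y)), sat_and_list; exact Hy.
Qed.

Lemma realize_last k B Phi :
  small_subset M B -> B d ->
  (forall p e, Phi p e -> forall i, S k <= i -> B (e i)) ->
  finitely_satisfiable M (S k) Phi ->
  exists b, forall l, (forall r, In r l -> Phi (fst r) (snd r)) ->
    exists y, forall r, In r l -> sat M (merge (S k) (upd y k b) (snd r)) (fst r).
Proof.
  intros HB Hd Hpar Hfin.
  set (code l := (last_coordinate k l, env_list (S k) d l)).
  set (Psi p e := exists l, (forall r, In r l -> Phi (fst r) (snd r)) /\ (p, e) = code l).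
  destruct (Hsat B HB Psi) as [b Hb].
  - intros p e [l [Hl E]] i _; injection E as -> ->.
    apply env_list_forall; auto; intros r Hr j Hj; apply (Hpar (fst r)); auto.
  - intros lp Hlp.
    destruct (list_preimage code (fun l => forall r, In r l -> Phi (fst r) (snd r)) lp)
      as [Ls [HLs ->]].
    { intros [p e] Hq; exact (Hlp _ Hq). }
    destruct (Hfin (concat Ls)) as [y Hy].
    { intros r Hr; apply in_concat in Hr as [l [Hl Hr]]; exact (HLs l Hl r Hr). }
    exists (y k); intros q Hq; apply in_map_iff in Hq as [l [<- Hl]].
    apply sat_last_coordinate; exists y; intros r Hr.
    generalize (Hy r (proj2 (in_concat Ls r) (ex_intro _ l (conj Hl Hr)))).
    apply sat_ext; intro i; unfold merge, upd; destruct (i <? S k), (Nat.eqb_spec i k); subst; auto.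
  - exists b; intros l Hl; apply sat_last_coordinate, (Hb (last_coordinate k l)).
    exists l; auto.
Qed.

Lemma realize k : forall B Phi,
  small_subset M B -> B d ->
  (forall p e, Phi p e -> forall i, k <= i -> B (e i)) ->
  finitely_satisfiable M k Phi ->
  exists y, forall p e, Phi p e -> sat M (merge k y e) p.
Proof.
  induction k as [|k IH]; intros B Phi HB Hd Hpar Hfin.
  - exists (fun _ => d); intros p e HP.
    destruct (Hfin [(p, e)]) as [y Hy]; [intros q [<-|[]]; auto|].
    exact (Hy (p, e) (or_introl eq_refl)).
  - destruct (realize_last k B Phi HB Hd Hpar Hfin) as [b Hb].
    set (Phi' p e := exists e0, Phi p e0 /\ e = upd e0 k b).
    destruct (IH (fun x => B x \/ x = b) Phi') as [y Hy].
    + apply presburger_small_subset_add; auto.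
    + left; auto.
    + intros p e [e0 [H0 ->]] i Hi; unfold upd; destruct (Nat.eqb_spec i k); auto.
      left; apply (Hpar p e0); auto; lia.
    + intros l Hl.
      destruct (list_preimage (fun r => (fst r, upd (snd r) k b)) (fun r => Phi (fst r) (snd r)) l)
        as [L [HL ->]].
      { intros [p e] Hq; destruct (Hl _ Hq) as [e0 [H0 E]]; exists (p, e0).
        split; [exact H0 | simpl in *; congruence]. }
      destruct (Hb L HL) as [y Hy]; exists y; intros q Hq; apply in_map_iff in Hq as [r [<- Hr]].
      generalize (Hy r Hr); apply sat_ext; intro i; simpl; apply merge_upd.
    + exists (upd y k b); intros p e HP.
      generalize (Hy p (upd e k b) (ex_intro _ e (conj HP eq_refl))).
      apply sat_ext; intro i; symmetry; apply merge_upd.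
Qed.

End Realize.

(** * Moving a cell away from itself *)

Section AllBelow.
Variables (M : PStruct) (phi : formula) (k : nat).

Definition defset_slot (i : nat) : nat :=
  match i with 0 => k | S j => if j <? k then j else S (S j) end.

Lemma defset_slot_inj : Injective defset_slot.
Proof. intros [|i] [|j]; simpl; nat_cases. Qed.

(* The tuple [y] sits in variables [0, k), the bound [z] in variable [S k], and
   the element [x] of [phi(M, y)] in variable [k]. *)
Definition all_below : formula :=
  FAll k (FOr (FNot (rename defset_slot phi)) (FLt (TVar k) (TVar (S k)))).

Definition bound_env (z : car M) : nat -> car M := upd (fun _ => zero M) (S k) z.

Lemma sat_all_below y z :
  sat M (merge k y (bound_env z)) all_below <-> forall x, defset M phi k y x -> lt M x z.
Proof.
  set (E x := upd (merge k y (bound_env z)) k x).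
  assert (HE : forall x, E x k = x /\ E x (S k) = z)
    by (intros x; unfold E, bound_env, merge, upd; nat_cases).
  assert (Hphi : forall x, sat M (E x) (rename defset_slot phi) <-> defset M phi k y x).
  { intros x; rewrite sat_rename by apply defset_slot_inj; apply sat_ext.
    intros [|j]; unfold E, bound_env, merge, upd; simpl; nat_cases. }
  unfold all_below; cbn [sat eval]; split; intros H x.
  - intros Hx; destruct (H x) as [H1|H1].
    + contradiction H1; apply Hphi, Hx.
    + change (lt M (E x k) (E x (S k))) in H1; destruct (HE x) as [-> ->] in H1; exact H1.
  - destruct (classic (defset M phi k y x)) as [Hx|Hx].
    + right; change (lt M (E x k) (E x (S k))); destruct (HE x) as [-> ->]; auto.
    + left; change (~ sat M (E x) (rename defset_slot phi)); rewrite Hphi; exact Hx.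
Qed.

Lemma sat_below p e y z :
  sat M (merge k y (interleave k (zero M) e (bound_env z))) (and_split k p all_below) <->
  sat M (merge k y e) p /\ forall x, defset M phi k y x -> lt M x z.
Proof. rewrite sat_and_split, sat_all_below; tauto. Qed.

End AllBelow.

Section Conjugate.
Variables (M M0 : PStruct) (f : car M0 -> car M) (phi : formula) (k : nat) (a : nat -> car M).
Hypothesis HM : presburger_model M.
Hypothesis Hel : elementary_emb M0 M f.

Let S0 := defset M phi k a.

Lemma hull_avoiding_M0 :
  single_point M S0 \/ bounded_1cell M S0 -> (forall m, ~ S0 (f m)) ->
  exists al be, (forall x, S0 x -> le M al x) /\ (forall x, S0 x -> le M x be) /\
                (forall m, le M al (f m) -> le M (f m) be -> False).
Proof.
  intros [[p Hp] | [al [be [N [c [_ [Hcell Hinf]]]]]]] Hout.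
  - exists p, p; split; [|split].
    + intros x Hx; apply Hp in Hx; subst; right; auto.
    + intros x Hx; apply Hp in Hx; subst; right; auto.
    + intros m H1 H2; apply (Hout m), Hp, le_antisym; auto.
  - exists al, be; split; [|split]; [intros x Hx; apply Hcell in Hx; tauto ..|].
    apply (cell_hull_avoids M0 M f al be N c HM Hel).
    + apply NNPP; intros Hne; apply Hinf; exists []; intros x Hx.
      apply Hne; exists x; apply Hcell, Hx.
    + intros m Hm; apply (Hout m), Hcell, Hm.
Qed.

Lemma satisfiable_below al be theta (E0 : nat -> car M0) :
  (forall x, S0 x -> le M x be) -> (forall m, le M al (f m) -> le M (f m) be -> False) ->
  sat M (merge k a (fun i => f (E0 i))) theta ->
  exists y, sat M (merge k y (fun i => f (E0 i))) theta /\
            forall x, defset M phi k y x -> lt M x al.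
Proof.
  intros HR HN Ha; apply NNPP; intros Hno.
  set (e0 := interleave k (zero M0) E0 (fun _ => zero M0)).
  set (psi := ex_prefix k (and_split k theta (all_below phi k))).
  set (D z := sat M (upd (fun i => f (e0 i)) (right_slot k (S k)) z) psi).
  assert (HD : forall z, D z <->
            exists y, sat M (merge k y (fun i => f (E0 i))) theta /\
                      forall x, defset M phi k y x -> lt M x z).
  { intros z; unfold D, psi; rewrite sat_ex_prefix.
    assert (Henv : forall i, upd (fun i => f (e0 i)) (right_slot k (S k)) z i =
                             interleave k (zero M) (fun i => f (E0 i)) (bound_env M k z) i).
    { intros i; unfold e0; rewrite (upd_ext _ _ _ _ (interleave_map f k _ _ _)).
      rewrite (elementary_zero M0 M f Hel); apply upd_interleave_right; lia. }
    assert (Hmerge : forall y i,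
              merge k y (upd (fun i => f (e0 i)) (right_slot k (S k)) z) i =
              merge k y (interleave k (zero M) (fun i => f (E0 i)) (bound_env M k z)) i)
      by (intros y i; unfold merge; rewrite Henv; auto).
    split; intros [y Hy]; exists y; revert Hy;
      rewrite (sat_ext _ _ _ _ (Hmerge y)), (sat_below M phi k); auto. }
  assert (Hal : forall z, D z -> lt M al z).
  { intros z Hz; apply HD in Hz as [y [Hy Hlt]]; apply NNPP; intros Hnlt.
    apply Hno; exists y; split; auto; intros x Hx; apply (lt_of_lt_of_nlt M HM x al z); auto. }
  assert (Hbe : D (add M be (one M))).
  { apply HD; exists a; split; auto; intros x Hx; apply lt_add1_of_le, HR; auto. }
  destruct (least_in_elementary_submodel M0 M f (right_slot k (S k)) psi e0 HM Hel)
    as [u [Hu Hmin]].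
  - exists (add M be (one M)); exact Hbe.
  - exists al; intros z Hz; left; apply Hal, Hz.
  - destruct (sub1_between M HM al be (f u)) as [H1 H2].
    + apply Hal, Hu.
    + intros Hlt; exact (Hmin _ Hlt Hbe).
    + apply (HN (sub M0 u (one M0))); rewrite elementary_sub1; auto.
Qed.

Definition below_type (al : car M) (p : formula) (e : nat -> car M) : Prop :=
  exists p0 (e0 : nat -> car M0), sat M (merge k a (fun i => f (e0 i))) p0 /\
    p = and_split k p0 (all_below phi k) /\
    e = interleave k (zero M) (fun i => f (e0 i)) (bound_env M k al).

Lemma below_type_params al p e :
  below_type al p e -> forall i, (exists m, f m = e i) \/ e i = al.
Proof.
  assert (Hzero : exists m, f m = zero M) by (exists (zero M0); apply (elementary_zero M0 M f Hel)).
  intros [p0 [e0 [_ [_ ->]]]].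
  apply (interleave_forall (fun x => (exists m, f m = x) \/ x = al)); eauto.
  intros j _; unfold bound_env, upd; destruct (j =? S k); auto.
Qed.

Lemma below_type_finitely_satisfiable al be :
  (forall x, S0 x -> le M x be) -> (forall m, le M al (f m) -> le M (f m) be -> False) ->
  finitely_satisfiable M k (below_type al).
Proof.
  intros HR HN l Hl.
  destruct (list_preimage
              (fun r => (and_split k (fst r) (all_below phi k),
                         interleave k (zero M) (fun i => f (snd r i)) (bound_env M k al)))
              (fun r => sat M (merge k a (fun i => f (snd r i))) (fst r)) l) as [L [HL ->]].
  { intros [p e] Hq; destruct (Hl _ Hq) as [p0 [e0 [H0 [Ep Ee]]]]; simpl in Ep, Ee; subst.
    exists (p0, e0); auto. }
  destruct (satisfiable_below al be (and_list k L) (env_list k (zero M0) L) HR HN) as [y [Hy Hlt]].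
  { apply (sat_and_list_map M f k (zero M0) L a); exact HL. }
  exists y; intros q Hq; apply in_map_iff in Hq as [r [<- Hr]].
  apply (sat_below M phi k); split; auto.
  exact (proj1 (sat_and_list_map M f k (zero M0) L y) Hy r Hr).
Qed.

End Conjugate.

Theorem lemma4p6 (M M0 : PStruct) (f : car M0 -> car M)
  (phi : formula) (k : nat) (a : nat -> car M) :
  presburger_model M ->
  saturated M ->
  elementary_emb M0 M f ->
  small_model M0 M ->
  (single_point M (defset M phi k a) \/ bounded_1cell M (defset M phi k a)) ->
  (forall m : car M0, ~ defset M phi k a (f m)) ->
  exists a' : nat -> car M,
    same_type M0 M f k a a' /\
    (forall x : car M, ~ (defset M phi k a x /\ defset M phi k a' x)).
Proof.
  intros HM Hsat Hel Hsmall Hshape Hout.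
  destruct (hull_avoiding_M0 M M0 f phi k a HM Hel Hshape Hout) as [al [be [HL [HR HN]]]].
  destruct (realize M HM Hsat (zero M) k (fun x => (exists m, f m = x) \/ x = al)
              (below_type M M0 f phi k a al)) as [a' Ha'].
  - apply presburger_small_subset_add, small_range; auto.
  - left; exists (zero M0); apply elementary_zero with (M := M); auto.
  - intros p e He i _; apply (below_type_params M M0 f phi k a Hel al p e He).
  - apply (below_type_finitely_satisfiable M M0 f phi k a HM Hel al be HR HN).
  - assert (Ha'_type : forall p e0, sat M (merge k a (fun i => f (e0 i))) p ->
              sat M (merge k a' (fun i => f (e0 i))) p /\
              forall x, defset M phi k a' x -> lt M x al).
    { intros p e0 Hp; apply (sat_below M phi k p _ a' al), Ha'; exists p, e0; auto. }
    exists a'; split.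
    + intros p e; split; intros Hp; [apply (Ha'_type p e Hp) |].
      apply NNPP; intros Hnp; apply (Ha'_type (FNot p) e Hnp), Hp.
    + intros x [Hx Hx']; apply (le_nlt M HM al x (HL x Hx)).
      apply (Ha'_type (FNot FFalse) (fun _ => zero M0)); [simpl; tauto | exact Hx'].
Qed.
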